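(* Let $p$ be prime and $A\subset\mathbb{Z}_{p^2}\times\mathbb{Z}_p$ be a spectral set with $\#A>p^2$. Then $A=\mathbb{Z}_{p^2}\times\mathbb{Z}_p$.
   Context: For $b=(b_1,b_2)\in G=\mathbb{Z}_{p^2}\times\mathbb{Z}_p$ let $\chi_b(a_1,a_2)=e^{2\pi i(a_1b_1/p^2+a_2b_2/p)}$. $A\subset G$ is a spectral set if there is $B\subset G$ such that $\{\chi_b|_A:b\in B\}$ is an orthogonal basis of $L^2(A)$ (counting measure). *)

From HB Require Import structures.
From mathcomp Require Import all_boot all_order all_algebra all_field.
Set Implicit Arguments. Unset Strict Implicit. Unset Printing Implicit Defensive.
Import Order.TTheory GRing.Theory Num.Theory.
Local Open Scope ring_scope.

Definition G (p : nat) : finType := ('Z_(p ^ 2) * 'Z_p)%type.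

(* e^{2 pi i / p^2} in algC: (p^2).-root (-1) is e^{i pi / p^2}. *)
Definition omega (p : nat) : algC := ((p ^ 2)%N.-root (-1)) ^+ 2.

(* chi_b(a) = e^{2 pi i (a1 b1 / p^2 + a2 b2 / p)}
            = omega^(a1 b1 + p a2 b2). *)
Definition chi (p : nat) (b a : G p) : algC :=
  omega p ^+ ((nat_of_ord a.1) * (nat_of_ord b.1)
              + p * ((nat_of_ord a.2) * (nat_of_ord b.2)))%N.

Definition inprodA (p : nat) (A : {set G p}) (f g : G p -> algC) : algC :=
  \sum_(a in A) f a * (g a)^*.

Definition orth_basis_on (p : nat) (A B : {set G p}) : Prop :=
  (forall b b', b \in B -> b' \in B -> b != b' ->
     inprodA A (chi b) (chi b') = 0) /\
  (forall b, b \in B -> inprodA A (chi b) (chi b) != 0) /\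
  (forall f : G p -> algC, exists c : G p -> algC,
     forall a, a \in A -> f a = \sum_(b in B) c b * chi b a).

Definition spectral (p : nat) (A : {set G p}) : Prop :=
  exists B : {set G p}, orth_basis_on A B.

From HB Require Import structures.
From mathcomp Require Import all_boot all_order all_algebra all_field.
From mathcomp Require Import zify.
Set Implicit Arguments. Unset Strict Implicit. Unset Printing Implicit Defensive.
Import GRing.Theory Num.Theory.
Local Open Scope ring_scope.

(* Since the restrictions of the [chi b], [b \in B], span all functions on
   [A], we get #|B| >= #|A| > p^2.  For [x != 0] the p translates [B + j x],
   [j < p], cannot be disjoint in a group of order p^3, so two distinct
   [b, c \in B] satisfy [b - c = m x] with [0 < m < p].  Orthogonality of
   [chi b] and [chi c] on [A] says that the Fourier coefficient
   [char_sum A (m x)] of the indicator of [A] vanishes, and the Galois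
   automorphism of Q(omega) sending omega to omega^m moves this zero to [x].
   Thus the Fourier transform of the indicator of [A] is supported at 0, so
   the indicator is constant and [A] is the whole group. *)

Lemma sum_expr_unity_root (R : idomainType) (w : R) n :
  w ^+ n = 1 -> w != 1 -> \sum_(i < n) w ^+ i = 0.
Proof.
move=> wn1 w_neq1; apply/eqP; have := subrX1 w n.
by rewrite wn1 subrr => /esym/eqP; rewrite mulf_eq0 subr_eq0 (negbTE w_neq1).
Qed.

Lemma prim_root_pexp (R : idomainType) (w : R) p k : prime p ->
  w ^+ (p ^ k.+1) = 1 -> w ^+ (p ^ k) != 1 -> (p ^ k.+1).-primitive_root w.
Proof.
move=> p_pr wpk1 wpk_neq1.
have pk1_gt0 : (0 < p ^ k.+1)%N by rewrite expn_gt0 prime_gt0.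
have [m w_prim /(dvdn_pfactor _ _ p_pr)[j le_jk1 def_m]] :=
  prim_order_exists pk1_gt0 wpk1.
suff /eqP def_j : j == k.+1 by rewrite -def_j -def_m.
rewrite eqn_leq le_jk1 ltnNge; apply: contra wpk_neq1 => le_jk.
by rewrite -(prim_order_dvd w_prim) def_m dvdn_exp2l.
Qed.

Lemma card_le_spanning (F : fieldType) (I T : finType) (phi : I -> T -> F)
    (A : {set T}) (B : {set I}) :
  (forall f : T -> F, exists c : I -> F,
     forall a, a \in A -> f a = \sum_(b in B) c b * phi b a) ->
  (#|A| <= #|B|)%N.
Proof.
move=> span.
pose M := \matrix_(i < #|B|, j < #|A|) phi (enum_val i) (enum_val j).
suff /eqP <- : row_full M by exact: rank_leq_row.
rewrite -sub1mx; apply/row_subP => j; apply/submxP.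
have [c Hc] := span (fun a => (a == enum_val j)%:R).
exists (\row_i c (enum_val i)); apply/rowP => k.
rewrite !mxE -(inj_eq enum_val_inj) eq_sym (Hc _ (enum_valP k)) big_enum_val.
by apply: eq_bigr => i _; rewrite !mxE.
Qed.

Lemma pigeonhole_mulrn (V : finZmodType) (B : {set V}) (x : V) n :
  (#|V| < #|B| * n)%N ->
  exists b c m, [/\ b \in B, c \in B, (0 < m < n)%N & b - c = x *+ m].
Proof.
move=> small_V; pose D := [set u : V * 'I_n | u.1 \in B].
pose f (u : V * 'I_n) := u.1 + x *+ u.2.
have /dinjectivePn[[b j] + [[c k]]] : ~~ dinjectiveb f D.
  apply: contraTN small_V => /dinjectiveP/leq_card_in; rewrite -leqNgt.
  suff -> : #|D| = (#|B| * n)%N by [].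
  rewrite -[in RHS](card_ord n) -cardsT -cardsX; apply: eq_card => -[u i].
  by rewrite !inE andbT.
rewrite !inE /= => bB /andP[neq_cb cB].
have shift b' c' (j' k' : nat) : (j' < k')%N ->
    b' + x *+ j' = c' + x *+ k' -> b' - c' = x *+ (k' - j').
  move=> lt_jk; rewrite -(subnKC (ltnW lt_jk)) mulrnDr => e.
  apply: (addIr (c' + x *+ j')); rewrite addrA subrK e.
  by rewrite addKn addrA [RHS]addrC.
rewrite /f /=; case: (ltngtP j k) => [lt_jk | lt_kj | /val_inj eq_jk] eq_f.
- exists b, c, (k - j)%N; split; [by [] | by [] | | exact: shift].
  by rewrite subn_gt0 lt_jk (leq_ltn_trans (leq_subr _ _)).
- exists c, b, (j - k)%N; split; [by [] | by [] | | exact: shift].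
  by rewrite subn_gt0 lt_kj (leq_ltn_trans (leq_subr _ _)).
- by move: neq_cb eq_f; rewrite eq_jk => /[swap] /addIr ->; rewrite eqxx.
Qed.

Lemma mulrn_coprime_eq0 (V : zmodType) (x : V) N m :
  (0 < N)%N -> x *+ N = 0 -> coprime m N -> (x *+ m == 0) = (x == 0).
Proof.
move=> N_gt0 xN0 co_mN; apply/eqP/eqP => [xm0 | ->]; last exact: mul0rn.
have [a _] := Bezoutl m N_gt0; rewrite gcdnC (eqP co_mN) => /dvdnP[k def_k].
have : x *+ (1 + a * m) = 0 by rewrite def_k mulnC mulrnA xN0 mul0rn.
by rewrite mulrnDr mulnC mulrnA xm0 mul0rn addr0.
Qed.

Lemma pair_mulrn (U V : zmodType) (u : U) (v : V) m :
  (u, v) *+ m = (u *+ m, v *+ m).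
Proof. by elim: m => [|m IHm] //; rewrite !mulrS IHm. Qed.

(* Makes [G p] a [finZmodType], which the library does not do for products. *)
HB.saturate prod.

Section Characters.

Variable p : nat.
Hypothesis p_pr : prime p.

Let p_gt1 : (1 < p)%N := prime_gt1 p_pr.
Let p2_gt1 : (1 < p ^ 2)%N.
Proof. by rewrite -[1%N](exp1n 2) ltn_exp2r. Qed.
Let Zp_p : (Zp_trunc p).+2 = p := Zp_cast p_gt1.
Let Zp_p2 : (Zp_trunc (p ^ 2)).+2 = (p ^ 2)%N := Zp_cast p2_gt1.

Let ltn_Zp (y : 'Z_p) : (y < p)%N.
Proof. by case: y => y /=; rewrite Zp_p. Qed.
Let ltn_Zp2 (y : 'Z_(p ^ 2)) : (y < p ^ 2)%N.
Proof. by case: y => y /=; rewrite Zp_p2. Qed.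

Lemma card_G : #|G p| = (p ^ 2 * p)%N.
Proof. by rewrite card_prod !card_ord Zp_p Zp_p2. Qed.

Lemma omega_p2 : omega p ^+ (p ^ 2) = 1.
Proof.
rewrite /omega -exprM mulnC exprM rootCK ?expn_gt0 ?prime_gt0 //.
by rewrite sqrrN expr1n.
Qed.

Lemma omega_modn i j : (i = j %[mod p ^ 2])%N -> omega p ^+ i = omega p ^+ j.
Proof.
by move=> eq_ij; rewrite -(expr_mod i omega_p2) eq_ij (expr_mod j omega_p2).
Qed.

Lemma chiD (b c a : G p) : chi (b + c) a = chi b a * chi c a.
Proof.
rewrite /chi -exprD; apply: omega_modn => /=.
move: (a.1 : nat) (a.2 : nat) (b.1 : nat) (b.2 : nat) (c.1 : nat) (c.2 : nat).
move=> a1 a2 b1 b2 c1 c2.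
rewrite Zp_p2 Zp_p (mulnCA p a2) (muln_modr p (b2 + c2) p) mulnn.
rewrite -modnDm modnMmr modnMmr modnDm.
by apply: (congr1 (modn^~ _)); nia.
Qed.

Lemma chiC (b a : G p) : chi b a = chi a b.
Proof. by rewrite /chi mulnC (mulnC a.2). Qed.

Lemma chi0 (a : G p) : chi 0 a = 1.
Proof. by rewrite /chi /= !muln0 addn0 expr0. Qed.

Lemma chiDr (b a c : G p) : chi b (a + c) = chi b a * chi b c.
Proof. by rewrite chiC chiD !(chiC b). Qed.

Lemma chiMn (b a : G p) m : chi (b *+ m) a = chi b a ^+ m.
Proof. by elim: m => [|m IHm]; rewrite ?chi0 // mulrS chiD IHm exprS. Qed.

Lemma chi_p2 (b a : G p) : chi b a ^+ (p ^ 2) = 1.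
Proof. by rewrite /chi exprAC omega_p2 expr1n. Qed.

Lemma conj_chi (b a : G p) : (chi b a)^* = chi (- b) a.
Proof.
have chiNK : chi b a * chi (- b) a = 1 by rewrite -chiD subrr chi0.
have norm_chi : `|chi b a| = 1.
  apply/eqP; rewrite -(pexpr_eq1 (n := (p ^ 2)%N)) ?expn_gt0 ?prime_gt0 //.
  by rewrite -normrX chi_p2 normr1.
have chi_neq0 : chi b a != 0.
  by apply: contra_eq_neq chiNK => ->; rewrite mul0r eq_sym oner_neq0.
by apply: (mulfI chi_neq0); rewrite chiNK -normCK norm_chi expr1n.
Qed.

Lemma G_mulrn_p2 (x : G p) : x *+ (p ^ 2) = 0.
Proof.
have Zp_mulrn_char q (y : 'Z_q) : (1 < q)%N -> y *+ q = 0.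
  by move=> q_gt1; rewrite -mulr_natr pchar_Zp // mulr0.
case: x => x1 x2; rewrite pair_mulrn Zp_mulrn_char //.
by rewrite -mulnn mulrnA Zp_mulrn_char // mul0rn.
Qed.

Lemma coprime_p2 m : (0 < m < p)%N -> coprime m (p ^ 2).
Proof.
case/andP=> m_gt0 lt_mp.
by rewrite coprime_sym coprimeXl // prime_coprime // gtnNdvd.
Qed.

Lemma G_mulrn_eq0 (x : G p) m : (0 < m < p)%N -> (x *+ m == 0) = (x == 0).
Proof.
move=> m_small.
apply: (mulrn_coprime_eq0 _ (G_mulrn_p2 x) (coprime_p2 m_small)).
by rewrite expn_gt0 prime_gt0.
Qed.

Definition char_sum (A : {set G p}) (x : G p) : algC := \sum_(a in A) chi x a.

Lemma inprodA_chi (A : {set G p}) (b c : G p) :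
  inprodA A (chi b) (chi c) = char_sum A (b - c).
Proof. by apply: eq_bigr => a _; rewrite conj_chi chiD. Qed.

Lemma char_sum_mulrn_eq0 (A : {set G p}) (x : G p) m :
  coprime m (p ^ 2) -> char_sum A (x *+ m) = 0 -> char_sum A x = 0.
Proof.
move=> co_m Fxm0; have [u uE] := Qn_aut_exists co_m.
apply/eqP; rewrite -(fmorph_eq0 u) rmorph_sum -[X in _ == X]Fxm0; apply/eqP.
by apply: eq_bigr => a _; rewrite uE ?chi_p2 ?chiMn.
Qed.

Lemma char_sum0 (A : {set G p}) : char_sum A 0 = #|A|%:R.
Proof.
by rewrite /char_sum (eq_bigr (fun _ => 1)) ?sumr_const // => a _; rewrite chi0.
Qed.

Lemma sum_chiE (z : G p) : \sum_(x : G p) chi x z =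
  (\sum_(i : 'Z_(p ^ 2)) (omega p ^+ z.1) ^+ i) *
  (\sum_(j : 'Z_p) (omega p ^+ (p * z.2)) ^+ j).
Proof.
rewrite big_distrlr pair_bigA /=; apply: eq_bigr => -[x1 x2] _.
rewrite chiC /chi exprD -!(exprM (omega p)) /=.
by congr (_ * _); congr (_ ^+ _); nia.
Qed.

Lemma sum_chi_eq0 (z : G p) : (p ^ 2).-primitive_root (omega p) ->
  z != 0 -> \sum_(x : G p) chi x z = 0.
Proof.
move=> omega_prim z_neq0; rewrite sum_chiE.
have unity1 k : (omega p ^+ k) ^+ (Zp_trunc (p ^ 2)).+2 = 1.
  by rewrite Zp_p2 exprAC omega_p2 expr1n.
have unity2 k : (omega p ^+ (p * k)) ^+ (Zp_trunc p).+2 = 1.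
  by rewrite Zp_p -exprM mulnAC mulnn exprM omega_p2 expr1n.
have [z1_eq0 | z1_neq0] := eqVneq z.1 0.
  have z2_neq0 : z.2 != 0.
    by apply: contraNneq z_neq0; case: z z1_eq0 => ? ? /= -> ->.
  rewrite [X in _ * X]sum_expr_unity_root ?mulr0 //.
  have p2_ndvd k : (0 < k < p)%N -> ~~ (p ^ 2 %| p * k)%N.
    case/andP=> k_gt0 lt_kp.
    by rewrite -mulnn dvdn_pmul2l ?prime_gt0 // gtnNdvd.
  by rewrite -(prim_order_dvd omega_prim) p2_ndvd // lt0n z2_neq0 ltn_Zp.
rewrite [X in X * _]sum_expr_unity_root ?mul0r //.
by rewrite -(prim_order_dvd omega_prim) gtnNdvd ?lt0n ?ltn_Zp2.
Qed.

Section SupportedAtZero.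

Variable A : {set G p}.
Hypothesis char_sum_supp : forall x, x != 0 -> char_sum A x = 0.
Hypothesis A_neq0 : A != set0.

Let card_A_neq0 : (#|A|%:R : algC) != 0.
Proof. by rewrite pnatr_eq0 cards_eq0. Qed.

(* Rather than computing the argument of [(p ^ 2).-root (-1)], we read the
   primitivity of [omega p] off the hypothesis: if [omega p ^+ p = 1], every
   character is trivial at [(p, 0) != 0], where [char_sum A] would be [#|A|]. *)
Lemma prim_root_omega : (p ^ 2).-primitive_root (omega p).
Proof.
apply: (prim_root_pexp (k := 1) p_pr omega_p2); rewrite expn1.
apply: contra card_A_neq0 => /eqP omega_p1.
pose x : G p := (p%:R, 0).
have x1E : x.1 = p :> nat.
  by rewrite /= val_Zp_nat // modn_small // -mulnn ltn_Pmull ?prime_gt0.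
have x_neq0 : x != 0.
  apply: contraTneq (prime_gt0 p_pr).
  by move=> /(congr1 (fun u : G p => nat_of_ord u.1)); rewrite x1E => ->.
rewrite -char_sum0 -(char_sum_supp x_neq0); apply/eqP/eq_bigr => a _.
by rewrite chi0 chiC /chi x1E /= !muln0 addn0 exprM omega_p1 expr1n.
Qed.

Lemma char_sum_supp0_setT : A = [set: G p].
Proof.
apply/setP => y; rewrite inE; apply: contraTT card_A_neq0 => yA.
rewrite negbK; apply/eqP.
have -> : #|A|%:R = \sum_(x : G p) char_sum A x * chi x (- y).
  rewrite (bigD1 (0 : G p)) //= char_sum0 chi0 mulr1 big1 ?addr0 // => x x_neq0.
  by rewrite char_sum_supp // mul0r.
under eq_bigr => x _ do rewrite /char_sum mulr_suml.
rewrite exchange_big big1 //= => a aA.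
under eq_bigr => x _ do rewrite -chiDr.
apply: sum_chi_eq0 prim_root_omega _; rewrite subr_eq0.
by apply: contraNneq yA => <-.
Qed.

End SupportedAtZero.

End Characters.

Theorem lemma5p2 (p : nat) (A : {set G p}) :
  prime p -> spectral A -> (p ^ 2 < #|A|)%N -> A = [set: G p].
Proof.
move=> p_pr [B [chi_orth [_ chi_span]]] lt_p2_A.
have lt_p2_B : (p ^ 2 < #|B|)%N :=
  leq_trans lt_p2_A (card_le_spanning chi_span).
apply: char_sum_supp0_setT => // [x x_neq0|]; last first.
  by rewrite -card_gt0 (leq_ltn_trans _ lt_p2_A).
have [|b [c [m [bB cB m_small bcE]]]] :=
  @pigeonhole_mulrn (G p : finZmodType) B x p.
  by rewrite (card_G p_pr) ltn_pmul2r ?prime_gt0.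
apply: (char_sum_mulrn_eq0 p_pr (coprime_p2 p_pr m_small)).
rewrite -bcE -(inprodA_chi p_pr); apply: chi_orth => //.
by rewrite -subr_eq0 bcE G_mulrn_eq0.
Qed.
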